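(* For integers $k\ge2$ and real $u\ge k$, $$F_k(u)=\sum_{j=0}^{k-1}(-1)^{k-j-1}\,P_{k-j}(u-j)\,F_j(u).$$
   Context: The functions $P_k$ are defined by $P_0(u)=1$ for $u\ge 0$, and for integers $k\ge1$, $P_k:[k,\infty)\to\mathbb{R}$ is the function with $P_k(k)=0$ and $uP_k'(u)=P_{k-1}(u-1)$ for $u\ge k$. The functions $F_k$ are defined by $F_0(u)=1$ for $u\ge0$, and for integers $k\ge1$, $F_k:[k,\infty)\to\mathbb{R}$ is the function with $F_k(k)=0$ and $(u-k+1)F_k'(u)=F_{k-1}(u)$ for $u\ge k$. *)

From Stdlib Require Import Reals Lra Lia.
From Coquelicot Require Import Coquelicot.
Open Scope R_scope.

(* P : nat -> R -> R is the family P_k of the paper (only the values on the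
   domain [k, +oo) of P_k are constrained).
   P_0(u) = 1 for u >= 0; for k >= 1: P_k(k) = 0, P_k is continuous from the
   right at k, and u P_k'(u) = P_{k-1}(u-1) for u > k. *)
Definition IsPFamily (P : nat -> R -> R) : Prop :=
  (forall u, 0 <= u -> P 0%nat u = 1) /\
  (forall k : nat, (1 <= k)%nat ->
     P k (INR k) = 0 /\
     filterlim (P k) (at_right (INR k)) (locally 0) /\
     (forall u, INR k < u -> is_derive (P k) u (P (k - 1)%nat (u - 1) / u))).

Definition IsFFamily (F : nat -> R -> R) : Prop :=
  (forall u, 0 <= u -> F 0%nat u = 1) /\
  (forall k : nat, (1 <= k)%nat ->
     F k (INR k) = 0 /\
     filterlim (F k) (at_right (INR k)) (locally 0) /\
     (forall u, INR k < u ->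
        is_derive (F k) u (F (k - 1)%nat u / (u - INR k + 1)))).

From Stdlib Require Import Reals Lra Lia.
From Coquelicot Require Import Coquelicot.
Open Scope R_scope.

(* Call T_j(u) = (-1)^(k-j-1) P_{k-j}(u-j) F_j(u) and G = T_0 + ... + T_{k-1}.
   Both sides vanish at u = k because P_m(m) = 0 and F_k(k) = 0.  For u > k the
   product rule splits T_j' into a "P-part" (from P_{k-j}') and an "F-part"
   (from F_j'), and the defining equations of the two families show that the
   F-part of T_{j+1} is the negative of the P-part of T_j, while the F-part
   of T_0 vanishes (F_0 is constant).  The sum of derivatives therefore
   telescopes to the P-part of T_{k-1}, which is F_{k-1}(u)/(u-k+1) = F_k'(u).
   So F_k and G have the same derivative on (k, oo) and the same right limit 0
   at k; a mean value argument then makes them equal. *)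

Lemma filterlim_Rmult {T : Type} (Flt : (T -> Prop) -> Prop) {FF : Filter Flt}
    (a b : T -> R) (la lb : R) :
  filterlim a Flt (locally la) -> filterlim b Flt (locally lb) ->
  filterlim (fun x => a x * b x) Flt (locally (la * lb)).
Proof.
  intros Ha Hb. eapply filterlim_comp_2; [exact Ha | exact Hb |].
  exact (filterlim_mult la lb).
Qed.

Lemma filterlim_Rplus {T : Type} (Flt : (T -> Prop) -> Prop) {FF : Filter Flt}
    (a b : T -> R) (la lb : R) :
  filterlim a Flt (locally la) -> filterlim b Flt (locally lb) ->
  filterlim (fun x => a x + b x) Flt (locally (la + lb)).
Proof.
  intros Ha Hb. exact (filterlim_comp_2 a b plus Ha Hb (filterlim_plus la lb)).
Qed.

Lemma filterlim_Rminus {T : Type} (Flt : (T -> Prop) -> Prop) {FF : Filter Flt}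
    (a b : T -> R) (la lb : R) :
  filterlim a Flt (locally la) -> filterlim b Flt (locally lb) ->
  filterlim (fun x => a x - b x) Flt (locally (la - lb)).
Proof.
  intros Ha Hb.
  exact (filterlim_comp_2 a (fun x => opp (b x)) plus Ha
           (filterlim_comp _ _ _ b opp _ _ _ Hb (filterlim_opp lb))
           (filterlim_plus la (opp lb))).
Qed.

Lemma filterlim_sum_f_R0_zero {T : Type} (Flt : (T -> Prop) -> Prop)
    {FF : Filter Flt} (g : nat -> T -> R) (n : nat) :
  (forall j, (j <= n)%nat -> filterlim (g j) Flt (locally 0)) ->
  filterlim (fun x => sum_f_R0 (fun j => g j x) n) Flt (locally 0).
Proof.
  induction n as [|n IHn]; intros Hg; simpl.
  - apply Hg; lia.
  - rewrite <- (Rplus_0_l 0).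
    apply (filterlim_Rplus Flt _ (g (S n))).
    + apply IHn; intros j Hj; apply Hg; lia.
    + apply Hg; lia.
Qed.

Lemma sum_f_R0_telescope (a b : nat -> R) (n : nat) :
  b O = 0 -> (forall j, (j < n)%nat -> b (S j) = - a j) ->
  sum_f_R0 (fun j => a j + b j) n = a n.
Proof.
  intros Hb0 Hb. induction n as [|n IHn]; simpl.
  - rewrite Hb0; ring.
  - rewrite IHn by (intros j Hj; apply Hb; lia). rewrite Hb by lia. ring.
Qed.

(* Two functions with the same derivative on (a, b] and the same right limit
   at a agree at b: their difference is constant on (a, b] by the mean value
   theorem, and its right limit at a is 0. *)
Lemma eq_of_same_derivative_right_limit (f g df : R -> R) (a b l : R) :
  a < b ->
  (forall t, a < t <= b -> is_derive f t (df t)) ->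
  (forall t, a < t <= b -> is_derive g t (df t)) ->
  filterlim f (at_right a) (locally l) -> filterlim g (at_right a) (locally l) ->
  f b = g b.
Proof.
  intros Hab Hf Hg Hlf Hlg.
  set (h := fun t => f t - g t).
  assert (Hdh : forall t, a < t <= b -> is_derive h t 0).
  { intros t Ht. assert (Hd := is_derive_minus f g t _ _ (Hf t Ht) (Hg t Ht)).
    rewrite minus_eq_zero in Hd. exact Hd. }
  assert (Hconst : forall t, a < t <= b -> h t = h b).
  { intros t Ht.
    destruct (MVT_gen h t b (fun _ => 0)) as [c [_ Hc]].
    - intros x Hx. rewrite Rmin_left, Rmax_right in Hx by lra. apply Hdh; lra.
    - intros x Hx. rewrite Rmin_left, Rmax_right in Hx by lra.
      apply continuity_pt_filterlim, (@ex_derive_continuous R_AbsRing R_NormedModule).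
      exists 0. apply Hdh; lra.
    - lra. }
  assert (Hlim0 : filterlim h (at_right a) (locally (l - l)))
    by exact (filterlim_Rminus _ f g l l Hlf Hlg).
  assert (Hlimb : filterlim h (at_right a) (locally (h b))).
  { apply (filterlim_ext_loc (fun _ => h b)); [| apply filterlim_const].
    assert (Hpos : 0 < b - a) by lra.
    exists (mkposreal _ Hpos). intros t Hball Hat. simpl in Hball.
    change (Rabs (t - a) < b - a) in Hball. apply Rabs_def2 in Hball.
    symmetry. apply Hconst. lra. }
  assert (Hh : h b = l - l)
    by exact (filterlim_locally_unique _ _ _ Hlimb Hlim0).
  unfold h in Hh. lra.
Qed.

Section Identity.

Variables (P F : nat -> R -> R).
Hypothesis hP : IsPFamily P.
Hypothesis hF : IsFFamily F.

Definition dF (j : nat) (x : R) : R :=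
  match j with O => 0 | S i => F i x / (x - INR j + 1) end.

Lemma F_derive (j : nat) (x : R) : INR j < x -> is_derive (F j) x (dF j x).
Proof.
  destruct hF as [hF0 hFk]. intros Hx. destruct j as [|i]; simpl.
  -
    apply (is_derive_ext_loc (fun _ => 1));
      [| exact (@is_derive_const R_AbsRing R_NormedModule 1 x)].
    eapply filter_imp; [| exact (open_gt 0 x Hx)].
    intros t Ht. symmetry. apply hF0. simpl in Ht. lra.
  - destruct (hFk (S i) ltac:(lia)) as [_ [_ Hd]].
    replace (S i - 1)%nat with i in Hd by lia. apply Hd, Hx.
Qed.

Lemma P_shift_derive (m : nat) (c x : R) : (1 <= m)%nat -> INR m < x - c ->
  is_derive (fun y => P m (y - c)) x (P (m - 1)%nat (x - c - 1) / (x - c)).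
Proof.
  intros Hm Hx. destruct hP as [_ hPk]. destruct (hPk m Hm) as [_ [_ Hd]].
  rewrite <- (scal_one (_ / _)).
  apply (is_derive_comp (P m) (fun y => y - c)); [apply Hd, Hx |].
  auto_derive; [exact I | reflexivity].
Qed.

Lemma P_shift_right_limit (m : nat) (c : R) : (1 <= m)%nat ->
  filterlim (fun y => P m (y - c)) (at_right (INR m + c)) (locally 0).
Proof.
  intros Hm. destruct hP as [_ hPk]. destruct (hPk m Hm) as [_ [Hlim _]].
  eapply filterlim_comp; [| exact Hlim].
  intros Q [eps He]. exists eps. intros y Hy Hgt. apply He; simpl; [| lra].
  change (Rabs (y - c - INR m) < eps).
  change (Rabs (y - (INR m + c)) < eps) in Hy.
  replace (y - c - INR m) with (y - (INR m + c)) by ring. exact Hy.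
Qed.

Variable k : nat.
Hypothesis hk : (1 <= k)%nat.

Definition term (j : nat) (y : R) : R :=
  (-1) ^ (k - j - 1) * P (k - j)%nat (y - INR j) * F j y.

Definition rhs (y : R) : R := sum_f_R0 (fun j => term j y) (k - 1).

(* The two halves of T_j'(x) given by the product rule. *)
Definition term_dP (x : R) (j : nat) : R :=
  (-1) ^ (k - j - 1) * (P (k - j - 1)%nat (x - INR j - 1) / (x - INR j)) * F j x.

Definition term_dF (x : R) (j : nat) : R :=
  (-1) ^ (k - j - 1) * P (k - j)%nat (x - INR j) * dF j x.

Lemma term_derive (x : R) (j : nat) : INR k < x -> (j <= k - 1)%nat ->
  is_derive (term j) x (term_dP x j + term_dF x j).
Proof.
  intros Hx Hj.
  assert (Hjx : INR j < x) by (assert (INR j <= INR k) by (apply le_INR; lia); lra).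
  assert (HPd := P_shift_derive (k - j) (INR j) x ltac:(lia)
                   ltac:(rewrite minus_INR by lia; lra)).
  assert (Hd := is_derive_mult _ _ _ _ _ (is_derive_scal _ _ ((-1) ^ (k - j - 1)) _ HPd)
                  (F_derive j x Hjx) Rmult_comm).
  exact Hd.
Qed.

Lemma term_dF_succ (x : R) (j : nat) : (j < k - 1)%nat ->
  term_dF x (S j) = - term_dP x j.
Proof.
  intros Hj. unfold term_dP, term_dF, dF.
  replace (k - j - 1)%nat with (S (k - S j - 1)) by lia.
  replace (k - S j)%nat with (S (k - S j - 1)) by lia.
  replace (S (k - S j - 1) - 1)%nat with (k - S j - 1)%nat by lia.
  rewrite <- tech_pow_Rmult, S_INR.
  replace (x - (INR j + 1) + 1) with (x - INR j) by ring.
  replace (x - (INR j + 1)) with (x - INR j - 1) by ring.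
  unfold Rdiv. ring.
Qed.

Lemma rhs_derive (x : R) : INR k < x ->
  is_derive rhs x (F (k - 1)%nat x / (x - INR k + 1)).
Proof.
  intros Hx.
  assert (Hsum : is_derive rhs x (sum_f_R0 (fun j => term_dP x j + term_dF x j) (k - 1))).
  { unfold rhs. rewrite <- sum_n_Reals.
    eapply is_derive_ext; [intros t; apply sum_n_Reals |].
    apply (@is_derive_sum_n R_AbsRing R_NormedModule term).
    intros j Hj. apply term_derive; [exact Hx | exact Hj]. }
  rewrite sum_f_R0_telescope in Hsum; [| unfold term_dF, dF; ring | exact (term_dF_succ x)].
  replace (F (k - 1)%nat x / (x - INR k + 1)) with (term_dP x (k - 1)); [exact Hsum |].
  destruct hP as [hP0 _].
  unfold term_dP. replace (k - (k - 1) - 1)%nat with O by lia.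
  rewrite minus_INR by lia. simpl. rewrite hP0 by lra.
  replace (x - (INR k - 1)) with (x - INR k + 1) by ring. field. lra.
Qed.

(* Each summand tends to 0 at k from the right, since P_{k-j}(y-j) does and
   F_j is continuous at k for j < k. *)
Lemma term_right_limit (j : nat) : (j <= k - 1)%nat ->
  filterlim (term j) (at_right (INR k)) (locally 0).
Proof.
  intros Hj. unfold term.
  replace 0 with ((-1) ^ (k - j - 1) * 0 * F j (INR k)) by ring.
  apply (filterlim_Rmult (at_right (INR k)));
    [apply (filterlim_Rmult (at_right (INR k))); [apply filterlim_const |] |].
  - replace (INR k) with (INR (k - j) + INR j) by (rewrite minus_INR by lia; ring).
    apply P_shift_right_limit; lia.
  -
    eapply filterlim_filter_le_1; [apply filter_le_within |].
    apply (@ex_derive_continuous R_AbsRing R_NormedModule). exists (dF j (INR k)).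
    apply F_derive, lt_INR; lia.
Qed.

Lemma rhs_right_limit : filterlim rhs (at_right (INR k)) (locally 0).
Proof. apply (filterlim_sum_f_R0_zero _ term). exact term_right_limit. Qed.

(* At u = k every summand contains the factor P_{k-j}(k-j) = 0. *)
Lemma rhs_at_k : rhs (INR k) = 0.
Proof.
  destruct hP as [_ hPk]. apply sum_eq_R0. intros j Hj. unfold term.
  rewrite <- minus_INR by lia.
  destruct (hPk (k - j)%nat ltac:(lia)) as [Hzero _]. rewrite Hzero. ring.
Qed.

Lemma F_eq_rhs (u : R) : INR k <= u -> F k u = rhs u.
Proof.
  intros Hu. destruct hF as [_ hFk]. destruct (hFk k hk) as [Fkk [Fklim Fkd]].
  destruct (Req_dec u (INR k)) as [-> | Hne].
  - rewrite Fkk, rhs_at_k. reflexivity.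
  - apply (eq_of_same_derivative_right_limit _ _
             (fun t => F (k - 1)%nat t / (t - INR k + 1)) (INR k) u 0);
      [lra | intros t Ht; apply Fkd; lra | intros t Ht; apply rhs_derive; lra
      | exact Fklim | exact rhs_right_limit].
Qed.

End Identity.

Theorem mainTheorem11 (P F : nat -> R -> R) (hP : IsPFamily P) (hF : IsFFamily F)
  (k : nat) (hk : (2 <= k)%nat) (u : R) (hu : INR k <= u) :
  F k u = sum_f_R0 (fun j : nat =>
            (-1) ^ (k - j - 1) * P (k - j)%nat (u - INR j) * F j u) (k - 1)%nat.
Proof. exact (F_eq_rhs P F hP hF k ltac:(lia) u hu). Qed.
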